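(* The function $f:(0,\infty)\to\mathbb{R}$, $f(z)=\tfrac12W(z)^2+W(z)$ (which equals $-T_2(-z)$ where $T_2(z)=\sum_{n\ge1}n^{n-2}z^n/n!$, for small $z$), is a Bernstein function.
   Context: $W$ is the principal branch of Lambert's W function: the solution of $W(z)e^{W(z)}=z$ that is real and positive for $z>0$, with $W(z)=\sum_{n\ge1}(-n)^{n-1}z^n/n!$ near $0$. A $C^\infty$ function $g:(0,\infty)\to\mathbb{R}$ is completely monotonic if $(-1)^ng^{(n)}(z)\ge0$ for all $z>0$ and $n\ge0$; $f$ is a Bernstein function if $f$ is $C^\infty$, $f(z)>0$ for all $z>0$, and $f'$ is completely monotonic. *)

From Stdlib Require Import Reals ClassicalEpsilon.
From Coquelicot Require Import Coquelicot.
Open Scope R_scope.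

(* Principal branch of Lambert W on (0,oo): the (unique) w > 0 with w e^w = z.
   Values for z <= 0 are irrelevant (unspecified). *)
Definition LambertW (z : R) : R :=
  epsilon (inhabits 0) (fun w => 0 < w /\ w * exp w = z).

Definition smooth_on_pos (g : R -> R) : Prop :=
  forall (n : nat) (z : R), 0 < z -> ex_derive_n g n z.

Definition completely_monotonic (g : R -> R) : Prop :=
  smooth_on_pos g /\
  forall (n : nat) (z : R), 0 < z -> 0 <= (-1) ^ n * Derive_n g n z.

Definition Bernstein (f : R -> R) : Prop :=
  smooth_on_pos f /\ (forall z, 0 < z -> 0 < f z) /\
  completely_monotonic (Derive f).

(* Since W' = e^(-W) / (1 + W), the derivative of f = W^2/2 + W is e^(-W).
   With u = 1 / (1 + W), induction and the chain rule give
   (d/dz)^n e^(-W) = (-1)^n e^(-(n+1) W) Q_n(u), where Q_0 = 1 and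
   Q_(n+1)(u) = (n+1) u Q_n(u) + u^3 Q_n'(u).  This recursion preserves
   nonnegativity of coefficients, so (-1)^n (f')^(n) >= 0 on (0, oo). *)

From Stdlib Require Import Reals Lra List ClassicalEpsilon Ranalysis5.
From Coquelicot Require Import Coquelicot.
Open Scope R_scope.
Import ListNotations.

Fixpoint peval (p : list R) (x : R) : R :=
  match p with nil => 0 | a :: q => a + x * peval q x end.

Fixpoint padd (p q : list R) : list R :=
  match p, q with
  | nil, _ => q
  | _, nil => p
  | a :: p', b :: q' => (a + b) :: padd p' q'
  end.

Fixpoint pderiv (p : list R) : list R :=
  match p with nil => nil | _ :: q => padd q (0 :: pderiv q) end.

Lemma peval_padd (p q : list R) (x : R) :
  peval (padd p q) x = peval p x + peval q x.
Proof.
  revert q; induction p as [|a p IH]; intros [|b q]; simpl; try ring.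
  rewrite IH; ring.
Qed.

Lemma peval_scale (c : R) (p : list R) (x : R) :
  peval (map (Rmult c) p) x = c * peval p x.
Proof. induction p as [|a p IH]; simpl; [|rewrite IH]; ring. Qed.

Lemma is_derive_peval (p : list R) (x : R) :
  is_derive (peval p) x (peval (pderiv p) x).
Proof.
  revert x; induction p as [|a p IH]; intros x; simpl.
  - apply (is_derive_const (K := R_AbsRing) 0).
  - auto_derive; [exists (peval (pderiv p) x); apply IH|].
    rewrite peval_padd; simpl.
    replace (Derive (fun x => peval p x) x) with (peval (pderiv p) x)
      by (symmetry; apply is_derive_unique, IH).
    ring.
Qed.

Lemma padd_nonneg (p q : list R) :
  List.Forall (Rle 0) p -> List.Forall (Rle 0) q -> List.Forall (Rle 0) (padd p q).
Proof.
  revert q; induction p as [|a p IH]; intros [|b q] Hp Hq; simpl; auto.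
  inversion Hp; inversion Hq; constructor; auto; lra.
Qed.

Lemma scale_nonneg (c : R) (p : list R) :
  0 <= c -> List.Forall (Rle 0) p -> List.Forall (Rle 0) (map (Rmult c) p).
Proof.
  intros Hc Hp; apply List.Forall_map; apply (List.Forall_impl _ (fun a Ha => Rmult_le_pos c a Hc Ha) Hp).
Qed.

Lemma pderiv_nonneg (p : list R) : List.Forall (Rle 0) p -> List.Forall (Rle 0) (pderiv p).
Proof.
  induction p as [|a p IH]; intros Hp; simpl; auto.
  inversion Hp; apply padd_nonneg; auto; constructor; [lra | auto].
Qed.

Lemma peval_nonneg (p : list R) (x : R) :
  0 <= x -> List.Forall (Rle 0) p -> 0 <= peval p x.
Proof.
  intros Hx; induction p as [|a p IH]; intros Hp; simpl; [lra|].
  inversion Hp; pose proof (IH H2); nra.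
Qed.

Definition xexp (w : R) : R := w * exp w.

Lemma xexp_lt (a b : R) : 0 <= a -> a < b -> xexp a < xexp b.
Proof.
  intros Ha Hab; unfold xexp.
  pose proof (exp_increasing a b Hab); pose proof (exp_pos a); nra.
Qed.

Lemma is_derive_xexp (w : R) : is_derive xexp w (exp w + w * exp w).
Proof. unfold xexp; auto_derive; auto; ring. Qed.

Lemma continuous_xexp (w : R) : continuity_pt xexp w.
Proof.
  apply derivable_continuous_pt; exists (exp w + w * exp w).
  apply is_derive_Reals, is_derive_xexp.
Qed.

Lemma LambertW_spec (z : R) : 0 < z -> 0 < LambertW z /\ xexp (LambertW z) = z.
Proof.
  intros Hz; unfold LambertW; apply epsilon_spec.
  assert (Hc : continuity (fun w => xexp w - z)).
  { intros w; apply continuity_pt_minus; [apply continuous_xexp | apply continuity_pt_const].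
    intros ? ?; reflexivity. }
  assert (Hexp : 1 + z < exp z) by (apply exp_ineq1; lra).
  destruct (IVT _ 0 z Hc Hz) as [w [Hw Hwz]]; unfold xexp in *.
  - rewrite Rmult_0_l; lra.
  - nra.
  - exists w; split; [|lra].
    destruct (Req_dec w 0) as [->|]; [rewrite Rmult_0_l in Hwz; lra | lra].
Qed.

Lemma LambertW_le_xexp (z a : R) : 0 < z -> 0 <= a -> z <= xexp a -> LambertW z <= a.
Proof.
  intros Hz Ha Hza; destruct (LambertW_spec z Hz) as [_ HW].
  destruct (Rle_or_lt (LambertW z) a) as [|Hlt]; auto.
  pose proof (xexp_lt _ _ Ha Hlt); lra.
Qed.

Lemma xexp_le_LambertW (z a : R) : 0 < z -> xexp a <= z -> a <= LambertW z.
Proof.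
  intros Hz Haz; destruct (LambertW_spec z Hz) as [HW0 HW].
  destruct (Rle_or_lt a (LambertW z)) as [|Hlt]; auto.
  pose proof (xexp_lt _ _ (Rlt_le _ _ HW0) Hlt); lra.
Qed.

Lemma LambertW_le (a b : R) : 0 < a -> a <= b -> LambertW a <= LambertW b.
Proof.
  intros Ha Hab; destruct (LambertW_spec b ltac:(lra)) as [HWb Hb].
  apply LambertW_le_xexp; lra.
Qed.

Lemma continuous_LambertW (z : R) : 0 < z -> continuity_pt LambertW z.
Proof.
  intros Hz; destruct (LambertW_spec z Hz) as [HW0 HW].
  set (w := LambertW z) in *.
  assert (Hlb : 0 < xexp (w / 2)) by (unfold xexp; pose proof (exp_pos (w / 2)); nra).
  apply (continuity_pt_recip_interv xexp LambertW (w / 2) (w + 1)); try lra.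
  - intros x y Hx Hxy _; apply xexp_lt; lra.
  - intros x Hx _; apply (LambertW_spec x); lra.
  - intros x Hx1 Hx2; split.
    + apply xexp_le_LambertW; lra.
    + apply LambertW_le_xexp; lra.
  - intros a _; apply continuous_xexp.
  - rewrite <- HW; split; apply xexp_lt; lra.
Qed.

Lemma is_derive_LambertW (z : R) : 0 < z ->
  is_derive LambertW z (exp (- LambertW z) / (1 + LambertW z)).
Proof.
  intros Hz; destruct (LambertW_spec z Hz) as [HW0 _].
  assert (Hmono : LambertW (z / 2) <= LambertW z <= LambertW (2 * z))
    by (split; apply LambertW_le; lra).
  assert (Hder : forall a, derivable_pt xexp a)
    by (intros a; exists (exp a + a * exp a); apply is_derive_Reals, is_derive_xexp).
  pose proof (derivable_pt_lim_recip_interv xexp LambertW (z / 2) (2 * z) z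
    (fun a _ => Hder a) (continuous_LambertW z Hz) ltac:(lra) ltac:(lra) Hmono) as H.
  rewrite (derive_pt_eq_0 _ _ _ _ (proj1 (is_derive_Reals _ _ _) (is_derive_xexp _))) in H.
  pose proof (exp_pos (LambertW z)).
  apply is_derive_Reals; rewrite exp_Ropp.
  replace (/ exp (LambertW z) / (1 + LambertW z))
    with (1 / (exp (LambertW z) + LambertW z * exp (LambertW z))) by (field; repeat split; nra).
  apply H; [intros x Hx; apply (LambertW_spec x); lra | nra].
Qed.

(* [(d/dz)^n exp (- W z) = dexpW n (W z)]. *)
Fixpoint dexpW_poly (n : nat) : list R :=
  match n with
  | O => [1]
  | S m => padd (0 :: map (Rmult (INR m + 1)) (dexpW_poly m))
                (0 :: 0 :: 0 :: pderiv (dexpW_poly m))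
  end.

Definition dexpW (n : nat) (w : R) : R :=
  (-1) ^ n * exp (- (INR n + 1) * w) * peval (dexpW_poly n) (/ (1 + w)).

Lemma dexpW_poly_nonneg (n : nat) : List.Forall (Rle 0) (dexpW_poly n).
Proof.
  induction n as [|n IH]; cbn [dexpW_poly].
  - repeat constructor; lra.
  - pose proof (pos_INR n).
    apply padd_nonneg; repeat apply List.Forall_cons; try apply Rle_refl.
    + apply scale_nonneg; auto; lra.
    + apply pderiv_nonneg, IH.
Qed.

Lemma dexpW_sign (n : nat) (w : R) : -1 < w -> 0 <= (-1) ^ n * dexpW n w.
Proof.
  intros Hw; unfold dexpW.
  replace ((-1) ^ n * ((-1) ^ n * exp (- (INR n + 1) * w) * peval (dexpW_poly n) (/ (1 + w))))
    with (((-1) * (-1)) ^ n * (exp (- (INR n + 1) * w) * peval (dexpW_poly n) (/ (1 + w))))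
    by (rewrite Rpow_mult_distr; ring).
  replace ((-1) * (-1)) with 1 by ring; rewrite pow1, Rmult_1_l.
  apply Rmult_le_pos; [apply Rlt_le, exp_pos|].
  apply peval_nonneg; [apply Rlt_le, Rinv_0_lt_compat; lra | apply dexpW_poly_nonneg].
Qed.

(* Multiplying by [W' = exp (- w) / (1 + w)] gives the chain rule in z. *)
Lemma is_derive_dexpW (n : nat) (w : R) : -1 < w ->
  is_derive (dexpW n) w (dexpW (S n) w * (1 + w) * exp w).
Proof.
  intros Hw; unfold dexpW.
  auto_derive.
  - split; [|lra]. exists (peval (pderiv (dexpW_poly n)) (/ (1 + w))); apply is_derive_peval.
  - rewrite (is_derive_unique _ _ _ (is_derive_peval _ _)).
    cbn [dexpW_poly]; rewrite peval_padd; cbn [peval]; rewrite peval_scale, S_INR.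
    replace (exp (- (INR n + 1 + 1) * w)) with (exp (- (INR n + 1) * w) * exp (- w))
      by (rewrite <- exp_plus; f_equal; ring).
    rewrite exp_Ropp; cbn [pow]; pose proof (exp_pos w); field; lra.
Qed.

Lemma is_derive_dexpW_LambertW (n : nat) (z : R) : 0 < z ->
  is_derive (fun z => dexpW n (LambertW z)) z (dexpW (S n) (LambertW z)).
Proof.
  intros Hz; destruct (LambertW_spec z Hz) as [HW0 _].
  eapply is_derive_ext; [intros t; reflexivity|].
  replace (dexpW (S n) (LambertW z)) with
    (exp (- LambertW z) / (1 + LambertW z) *
     (dexpW (S n) (LambertW z) * (1 + LambertW z) * exp (LambertW z))).
  - apply (is_derive_comp (dexpW n) LambertW z); [apply is_derive_dexpW; lra|].
    apply is_derive_LambertW, Hz.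
  - rewrite exp_Ropp; pose proof (exp_pos (LambertW z)); field; lra.
Qed.

Lemma Derive_n_derivative_sequence (h : R -> R) (g : nat -> R -> R) :
  (forall z, 0 < z -> h z = g O z) ->
  (forall n z, 0 < z -> is_derive (g n) z (g (S n) z)) ->
  forall n z, 0 < z -> Derive_n h n z = g n z /\ ex_derive_n h n z.
Proof.
  intros Hh Hg n; induction n as [|n IH]; intros z Hz; [split; [apply Hh, Hz | exact I]|].
  assert (Hloc : locally z (fun t => g n t = Derive_n h n t)).
  { exists (mkposreal z Hz); intros t Ht.
    change (Rabs (t - z) < z) in Ht; apply Rabs_def2 in Ht; symmetry; apply IH; lra. }
  split.
  - simpl; rewrite <- (Derive_ext_loc _ _ _ Hloc); apply is_derive_unique, Hg, Hz.
  - apply (ex_derive_ext_loc _ _ _ Hloc); eexists; apply Hg, Hz.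
Qed.

Lemma is_derive_half_sq_LambertW (z : R) : 0 < z ->
  is_derive (fun z => / 2 * LambertW z ^ 2 + LambertW z) z (dexpW O (LambertW z)).
Proof.
  intros Hz; destruct (LambertW_spec z Hz) as [HW0 _].
  eapply is_derive_ext; [intros t; reflexivity|].
  replace (dexpW O (LambertW z)) with
    (exp (- LambertW z) / (1 + LambertW z) * (LambertW z + 1)).
  - apply (is_derive_comp (fun w => / 2 * w ^ 2 + w) LambertW z).
    + auto_derive; auto; field.
    + apply is_derive_LambertW, Hz.
  - unfold dexpW; simpl; replace (- (0 + 1) * LambertW z) with (- LambertW z) by ring.
    field; lra.
Qed.

Theorem mainTheorem9 :
  Bernstein (fun z => / 2 * LambertW z ^ 2 + LambertW z).
Proof.
  set (f := fun z => / 2 * LambertW z ^ 2 + LambertW z).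
  set (fseq := fun n => match n with O => f | S m => fun z => dexpW m (LambertW z) end).
  set (dseq := fun n z => dexpW n (LambertW z)).
  assert (Hf : forall n z, 0 < z -> Derive_n f n z = fseq n z /\ ex_derive_n f n z).
  { apply Derive_n_derivative_sequence; [reflexivity|].
    intros [|n] z Hz; [apply is_derive_half_sq_LambertW | apply is_derive_dexpW_LambertW]; exact Hz. }
  assert (Hdf : forall n z, 0 < z ->
    Derive_n (Derive f) n z = dseq n z /\ ex_derive_n (Derive f) n z).
  { apply Derive_n_derivative_sequence.
    - intros z Hz; apply is_derive_unique, is_derive_half_sq_LambertW, Hz.
    - intros n z Hz; apply is_derive_dexpW_LambertW, Hz. }
  split; [|split; [|split]].
  - intros n z Hz; apply Hf, Hz.
  - intros z Hz; destruct (LambertW_spec z Hz) as [HW0 _].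
    unfold f; pose proof (pow_lt _ 2 HW0); lra.
  - intros n z Hz; apply Hdf, Hz.
  - intros n z Hz; rewrite (proj1 (Hdf n z Hz)).
    apply dexpW_sign; destruct (LambertW_spec z Hz); lra.
Qed.
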